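(* Let $K$ be a number field, let $X\subseteq M_d(K)$ be closed in the linear Zariski topology, let $\mathcal S=\langle X\rangle$, and let $R\subseteq\mathcal S$ be a set of completely pseudo-regular matrices. (1) If $A,B\in R$ lie in the same strongly connected component of $G(R)$, then $A\sim_{\mathcal S}B$. (2) For every $r$, the graph $G(R)$ has at most $\binom{d}{r}$ strongly connected components consisting of matrices of rank $r$.
   Context: A matrix $C$ is completely pseudo-regular if it lies in a subgroup of the multiplicative semigroup $M_d(K)$ (equivalently $\operatorname{im}C\cap\ker C=0$). $G(R)$ is the directed graph with vertex set $R$ and a directed edge $A\to B$ whenever $\ker(B)\cap\operatorname{im}(A)=0$ (loops allowed). For $P,Q\in M_d(K)$ write $P\parallel Q$ if $\operatorname{im}P=\operatorname{im}Q$ and $\ker P=\ker Q$; for $P,Q\in\mathcal S$, $P\sim_{\mathcal S}Q$ means there exist $C,D,C',D'\in\mathcal S\cup\{I\}$ with $Q\parallel DPC$ and $P\parallel D'QC'$. *)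

From HB Require Import structures.
From mathcomp Require Import all_boot all_order all_algebra all_field.
Set Implicit Arguments. Unset Strict Implicit. Unset Printing Implicit Defensive.
Import GRing.Theory.
Local Open Scope ring_scope.

(* Matrices act on COLUMN vectors, as in the paper.  In MathComp's row-space
   language: the column space im A is the row space of A^T, and
   ker A = {v | A v = 0} corresponds to kermx A^T. *)
Section Defs.
Variables (K : fieldType) (d : nat).
Local Notation M := 'M[K]_d.

Definition mx_im (A : M) : M := A^T.
Definition mx_ker (A : M) : M := kermx A^T.

(* Linear Zariski topology: closed sets are finite unions of affine
   subspaces P + W of M_d(K), W a K-linear subspace (encoded via mxvec). *)
Definition linZariski_closed (X : M -> Prop) : Prop :=
  exists s : seq (M * 'M[K]_(d * d)),
    forall A, X A <-> has (fun p => (mxvec (A - p.1) <= p.2)%MS) s.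

Inductive gen_semigroup (X : M -> Prop) : M -> Prop :=
| gen_base A : X A -> gen_semigroup X A
| gen_mul A B : gen_semigroup X A -> gen_semigroup X B -> gen_semigroup X (A *m B).

Definition completely_pseudo_regular (C : M) : Prop :=
  exists (G : M -> Prop) (e : M),
    [/\ G C, G e,
        (forall x y, G x -> G y -> G (x *m y)),
        (forall x, G x -> e *m x = x /\ x *m e = x) &
        (forall x, G x -> exists y, [/\ G y, x *m y = e & y *m x = e])].

Definition mx_parallel (P Q : M) : Prop :=
  (mx_im P == mx_im Q)%MS /\ (mx_ker P == mx_ker Q)%MS.

Definition sim_S (S : M -> Prop) (P Q : M) : Prop :=
  exists C D C' D' : M,
    [/\ S C \/ C = 1%:M, S D \/ D = 1%:M, S C' \/ C' = 1%:M & S D' \/ D' = 1%:M] /\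
    mx_parallel Q (D *m P *m C) /\ mx_parallel P (D' *m Q *m C').

Definition GR_edge (R : M -> Prop) (A B : M) : Prop :=
  [/\ R A, R B & (mx_ker B :&: mx_im A == (0 : M))%MS].

Inductive GR_reach (R : M -> Prop) : M -> M -> Prop :=
| reach_refl A : R A -> GR_reach R A A
| reach_step A B C : GR_edge R A B -> GR_reach R B C -> GR_reach R A C.

Definition same_scc (R : M -> Prop) (A B : M) : Prop :=
  GR_reach R A B /\ GR_reach R B A.

End Defs.

(* Along an edge A -> B of G(R) the matrix B is injective on im A, so composing
   along a path from A to B gives D ∈ S ∪ {I} with rank (D A) = rank A and
   im (D A) ⊆ im B.  As a completely pseudo-regular A is injective on its own
   image, the product D A C B built from paths A ~> B and B ~> A has the rank of
   B, its image lies in im B and its kernel contains ker B; so it is ∥ B.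
   For the count, factor each A_i = P_i Q_i through K^r.  Then A_i -> A_j is an
   edge iff det (Q_j P_i) != 0, so G = (det (Q_j P_i))_ij has a nonzero
   diagonal, and a permutation supported on nonzero entries of G would close
   cycles through distinct components; hence det G is its diagonal product and
   G is invertible.  By (a weak form of) Cauchy-Binet, G factors through the
   C(d, r) maximal minors of the P_i. *)

From HB Require Import structures.
From mathcomp Require Import all_boot all_order all_algebra all_field all_fingroup.
Set Implicit Arguments. Unset Strict Implicit. Unset Printing Implicit Defensive.
Import GRing.Theory.
Local Open Scope ring_scope.

Lemma mxrank_injS (F : fieldType) m1 m2 n p (Y : 'M[F]_(m1, n)) (Z : 'M_(m2, n))
    (f : 'M_(n, p)) :
  (Y <= Z)%MS -> \rank (Z *m f) = \rank Z -> \rank (Y *m f) = \rank Y.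
Proof.
move=> sYZ /mxrank_injP injZ; apply/mxrank_injP.
rewrite -submx0 in injZ; rewrite -(submx0 (Y :&: kermx f)%MS).
exact: submx_trans (capmxS sYZ (submx_refl _)) injZ.
Qed.

Lemma mxrank_fullM (F : fieldType) m n p (P : 'M[F]_(m, n)) (X : 'M_(n, p)) :
  row_full P -> \rank (P *m X) = \rank X.
Proof.
move=> fullP; rewrite -mxrank_tr trmx_mul mxrankMfree ?mxrank_tr //.
by rewrite /row_free mxrank_tr.
Qed.

Section ImageKernel.
Variables (F : fieldType) (d : nat).
Local Notation M := 'M[F]_d.

Lemma mx_im_mulr (A B : M) : (mx_im (A *m B) <= mx_im A)%MS.
Proof. by rewrite /mx_im trmx_mul submxMl. Qed.

Lemma mx_ker_mull (A B : M) : (mx_ker B <= mx_ker (A *m B))%MS.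
Proof. by apply/sub_kermxP; rewrite trmx_mul mulmxA mulmx_ker mul0mx. Qed.

Lemma mxrank_mul_imS (D Y Z : M) :
  (mx_im Y <= mx_im Z)%MS -> \rank (D *m Z) = \rank Z -> \rank (D *m Y) = \rank Y.
Proof.
rewrite -[\rank (D *m Z)]mxrank_tr -[\rank Z]mxrank_tr trmx_mul => sYZ injZ.
by rewrite -mxrank_tr -[\rank Y]mxrank_tr trmx_mul (mxrank_injS sYZ injZ).
Qed.

Lemma ker_cap_im0P (A B : M) :
  reflect (\rank (B *m A) = \rank A) (mx_ker B :&: mx_im A == (0 : M))%MS.
Proof.
rewrite sub0mx andbT submx0 capmxC -(mxrank_tr (B *m A)) -(mxrank_tr A) trmx_mul.
exact: mxrank_injP.
Qed.

Lemma mx_parallel_mul (E B : M) :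
  (mx_im (E *m B) <= mx_im B)%MS -> \rank (E *m B) = \rank B -> mx_parallel B (E *m B).
Proof.
move=> sIm rEB; split.
  apply/eqmxP/eqmx_sym/eqmxP.
  by rewrite -(geq_leqif (mxrank_leqif_eq sIm)) !mxrank_tr rEB.
have sKer := mx_ker_mull E B.
by rewrite /mx_ker -(geq_leqif (mxrank_leqif_eq sKer)) !mxrank_ker !mxrank_tr rEB.
Qed.

Lemma cpr_mxrank_sqr (A : M) : completely_pseudo_regular A -> \rank (A *m A) = \rank A.
Proof.
case=> G [e [GA _ _ Gid Ginv]]; have [y [_ Ay yA]] := Ginv A GA.
apply/eqP; rewrite eqn_leq mxrankM_maxl /=.
by rewrite -{1}(Gid A GA).1 -yA -mulmxA mxrankM_maxr.
Qed.

Lemma cpr_ker_cap_im0 (A : M) :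
  completely_pseudo_regular A -> (mx_ker A :&: mx_im A == (0 : M))%MS.
Proof. by move/cpr_mxrank_sqr/ker_cap_im0P. Qed.

End ImageKernel.

Section Reachability.
Variables (F : fieldType) (d : nat) (R : 'M[F]_d -> Prop).
Local Notation M := 'M[F]_d.

Lemma GR_reach_meml (A B : M) : GR_reach R A B -> R A.
Proof. by case=> // ? ? ? []. Qed.

Variable S : M -> Prop.
Hypothesis sub_RS : forall A, R A -> S A.
Hypothesis S_mul : forall A B, S A -> S B -> S (A *m B).

Definition S_or_1 (D : M) := S D \/ D = 1%:M.

Lemma S_or_1_mulr (D A : M) : S_or_1 D -> S A -> S (D *m A).
Proof. by case=> [SD SA | ->]; [exact: S_mul | rewrite mul1mx]. Qed.

Lemma GR_reach_lmul (A B : M) : GR_reach R A B ->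
  exists2 D, S_or_1 D & \rank (D *m A) = \rank A /\ (mx_im (D *m A) <= mx_im B)%MS.
Proof.
elim=> {A B} [A _ | A A1 B [_ RA1 /ker_cap_im0P rA1A] _ [D SD [rDA1 imDA1]]].
  by exists 1%:M; [right | rewrite mul1mx].
exists (D *m A1); first by left; exact: S_or_1_mulr (sub_RS RA1).
split; last exact: submx_trans (mx_im_mulr _ _) imDA1.
by rewrite -mulmxA (mxrank_mul_imS (mx_im_mulr A1 A) rDA1) rA1A.
Qed.

Hypothesis R_cpr : forall A, R A -> completely_pseudo_regular A.

Lemma same_scc_parallel (A B : M) : same_scc R A B ->
  exists C D, [/\ S_or_1 C, S_or_1 D & mx_parallel B (D *m A *m C)].
Proof.
move=> [rAB rBA].
have [D SD [rDA imDA]] := GR_reach_lmul rAB.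
have [C SC [rCB imCB]] := GR_reach_lmul rBA.
exists (C *m B), D; split => //.
  by left; exact: S_or_1_mulr (sub_RS (GR_reach_meml rBA)).
have rZ : \rank (D *m (A *m (C *m B))) = \rank B.
  rewrite (mxrank_mul_imS (mx_im_mulr _ _) rDA) -rCB.
  exact: mxrank_mul_imS imCB (cpr_mxrank_sqr (R_cpr (GR_reach_meml rAB))).
rewrite !mulmxA; apply: mx_parallel_mul; last by rewrite -!mulmxA.
by rewrite -mulmxA; exact: submx_trans (mx_im_mulr (D *m A) (C *m B)) imDA.
Qed.

End Reachability.

Section MaximalMinors.
Variables (F : fieldType) (d r : nat).

Definition incr_tuples := [set t : r.-tuple 'I_d | sorted ltn [seq val i | i <- t]].

Definition max_minor (P : 'M[F]_(d, r)) (k : 'I_#|incr_tuples|) : F :=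
  \det (rowsub (tnth (enum_val k)) P).

Definition in_minor_span (phi : 'M[F]_(d, r) -> F) :=
  exists v : 'I_#|incr_tuples| -> F, forall P, phi P = \sum_k v k * max_minor P k.

Lemma in_minor_span_sum (I : finType) (phi : I -> 'M[F]_(d, r) -> F) :
  (forall i, in_minor_span (phi i)) -> in_minor_span (fun P => \sum_i phi i P).
Proof.
move=> /fin_all_exists [v Hv]; exists (fun k => \sum_i v i k) => P.
rewrite (eq_bigr _ (fun i _ => Hv i P)) exchange_big /=.
by apply: eq_bigr => k _; rewrite mulr_suml.
Qed.

Lemma rowsub_sorted_perm (g : 'I_r -> 'I_d) : injective g ->
  exists2 t, t \in incr_tuples & exists p : 'S_r, forall i, g i = tnth t (p i).
Proof.
move=> g_inj; pose t := sort_tuple (fun i j : 'I_d => (i <= j)%N) [tuple g i | i < r].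
have gt : perm_eq [tuple g i | i < r] t by rewrite perm_sym perm_sort.
have [p tE] := tuple_permP gt.
exists t; last first.
  by exists p => i; have := congr1 (nth (g i) ^~ i) tE; rewrite -!tnth_nth !tnth_mktuple.
rewrite inE ltn_sorted_uniq_leq sorted_map sort_sorted ?andbT; last first.
  by move=> i j; exact: leq_total.
rewrite (map_inj_uniq val_inj) -(perm_uniq gt).
by apply/tuple_uniqP => i j; rewrite !tnth_mktuple => /g_inj.
Qed.

Lemma in_minor_span_rowsub (w : F) (g : 'I_r -> 'I_d) :
  in_minor_span (fun P => w * \det (rowsub g P)).
Proof.
have [/injectivePn [i1 [i2 ne gE]] | /negPn/injectiveP g_inj] := boolP (~~ injectiveb g).
  exists (fun=> 0) => P; rewrite big1 => [|k _]; last by rewrite mul0r.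
  by rewrite (determinant_alternate ne) ?mulr0 // => j; rewrite !mxE gE.
have [t tS [p gE]] := rowsub_sorted_perm g_inj.
exists (fun k => if k == enum_rank_in tS t then w * (-1) ^+ p else 0) => P.
rewrite (bigD1 (enum_rank_in tS t)) //= eqxx big1 ?addr0 => [|k /negPf ->]; last first.
  by rewrite mul0r.
have -> : rowsub g P = row_perm p (rowsub (tnth t) P).
  by apply/matrixP => i j; rewrite !mxE gE.
by rewrite /max_minor enum_rankK_in // row_permE det_mulmx det_perm mulrA.
Qed.

Lemma det_mulmx_rowsub (Q : 'M[F]_(r, d)) (P : 'M[F]_(d, r)) :
  \det (Q *m P) = \sum_(f : {ffun 'I_r -> 'I_d}) (\prod_i Q i (f i)) * \det (rowsub f P).
Proof.
transitivity (\sum_(s : 'S_r) \sum_(f : {ffun 'I_r -> 'I_d})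
   (\prod_i Q i (f i)) * ((-1) ^+ s * \prod_i P (f i) (s i))).
  apply: eq_bigr => s _.
  rewrite (eq_bigr (fun i => \sum_k Q i k * P k (s i))) => [|i _]; last by rewrite mxE.
  rewrite bigA_distr_bigA big_distrr; apply: eq_bigr => f _ /=.
  by rewrite big_split /= mulrCA.
rewrite exchange_big; apply: eq_bigr => f _ /=; rewrite big_distrr /=.
by apply: eq_bigr => s _; congr (_ * (_ * _)); apply: eq_bigr => i _; rewrite mxE.
Qed.

Lemma in_minor_span_det_mul (Q : 'M[F]_(r, d)) : in_minor_span (fun P => \det (Q *m P)).
Proof.
have [v Hv] := in_minor_span_sum (fun f : {ffun 'I_r -> 'I_d} =>
  in_minor_span_rowsub (\prod_i Q i (f i)) f).
by exists v => P; rewrite det_mulmx_rowsub Hv.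
Qed.

End MaximalMinors.

Lemma det_diag_support (R : comPzRingType) n (M : 'M[R]_n) :
  (forall s : 'S_n, s != 1%g -> exists i, M i (s i) = 0) -> \det M = \prod_i M i i.
Proof.
move=> offdiag0; rewrite /determinant (bigD1 1%g) //= [X in _ + X]big1 ?addr0 => [|s s_ne1].
  by rewrite odd_perm1 expr0 mul1r; apply: eq_bigr => i _; rewrite perm1.
have [i Mi0] := offdiag0 s s_ne1.
by rewrite (bigD1 i) //= Mi0 mul0r mulr0.
Qed.

Section Components.
Variables (F : fieldType) (d : nat) (R : 'M[F]_d -> Prop).
Local Notation M := 'M[F]_d.

Lemma mxrank_full_factor (A : M) r : \rank A = r ->
  exists P : 'M_(d, r), exists Q : 'M_(r, d), [/\ A = P *m Q, row_full P & row_free Q].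
Proof.
move=> <-; exists (col_base A), (row_base A).
by rewrite mulmx_base col_base_full row_base_free.
Qed.

Lemma ker_cap_im0_det (A A' : M) r (P P' : 'M_(d, r)) (Q Q' : 'M_(r, d)) :
  A = P *m Q -> A' = P' *m Q' -> row_full P -> row_free Q -> row_full P' ->
  (mx_ker A' :&: mx_im A == (0 : M))%MS = (\det (Q' *m P) != 0).
Proof.
move=> -> -> fullP freeQ fullP'.
rewrite (sameP (ker_cap_im0P _ _) eqP) -unitfE -unitmxE -row_free_unit /row_free.
by rewrite !mulmxA !(mxrankMfree _ freeQ) (eqP fullP) -mulmxA mxrank_fullM.
Qed.

Lemma perm_edges_same_scc n (A : 'I_n -> M) (s : 'S_n) :
  (forall i, GR_edge R (A i) (A (s i))) -> forall i, same_scc R (A i) (A (s i)).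
Proof.
move=> edge_s.
have reach_iter k i : GR_reach R (A i) (A (iter k s i)).
  elim: k i => [|k IH] i; first by have [RA _ _] := edge_s i; exact: reach_refl.
  by rewrite iterSr; exact: reach_step (edge_s i) (IH (s i)).
move=> i; split; first exact: (reach_iter 1%N).
have := reach_iter #[s]%g.-1 (s i).
by rewrite -iterSr prednK ?order_gt0 // -permX expg_order perm1.
Qed.

Lemma edge_matrix_det_neq0 n (A : 'I_n -> M) (G : 'M[F]_n) :
  (forall i j, i != j -> ~ same_scc R (A i) (A j)) ->
  (forall i j, G i j != 0 -> GR_edge R (A i) (A j)) ->
  (forall i, G i i != 0) -> \det G != 0.
Proof.
move=> A_scc G_edge G_diag; rewrite det_diag_support; first by apply/prodf_neq0 => i _.
move=> s s_ne1.
have [/existsP [i /eqP Gi0] | /existsPn G_s] := boolP [exists i, G i (s i) == 0].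
  by exists i.
have [i s_i] : exists i, s i != i.
  have [/existsP // | /existsPn s_id] := boolP [exists i, s i != i].
  by case/eqP: s_ne1; apply/permP => i; rewrite perm1; apply/eqP/negPn/s_id.
have [reach_i_si reach_si_i] := perm_edges_same_scc (fun j => G_edge j (s j) (G_s j)) i.
by exfalso; exact: A_scc (s i) i s_i (conj reach_si_i reach_i_si).
Qed.

Hypothesis R_cpr : forall A, R A -> completely_pseudo_regular A.

Lemma scc_rank_card_le r (s : seq M) :
  (forall A, A \in s -> R A /\ \rank A = r) ->
  (forall i j, (i < size s)%N -> (j < size s)%N -> i <> j ->
     ~ same_scc R (nth 0 s i) (nth 0 s j)) ->
  (size s <= 'C(d, r))%N.
Proof.
move=> s_R s_scc; pose A (i : 'I_(size s)) := nth 0 s i.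
have A_R i : R (A i) /\ \rank (A i) = r := s_R _ (mem_nth 0 (ltn_ord i)).
have [PQ PQ_fact] : exists PQ : 'I_(size s) -> 'M_(d, r) * 'M_(r, d),
    forall i, [/\ A i = (PQ i).1 *m (PQ i).2, row_full (PQ i).1 & row_free (PQ i).2].
  apply: (@fin_all_exists _ (fun=> ('M_(d, r) * 'M_(r, d))%type)
    (fun i PQ => [/\ A i = PQ.1 *m PQ.2, row_full PQ.1 & row_free PQ.2])) => i.
  by have [P [Q PQ_A]] := mxrank_full_factor (A_R i).2; exists (P, Q).
have [v v_minor] : exists v : 'I_(size s) -> 'I_#|incr_tuples d r| -> F,
    forall j P, \det ((PQ j).2 *m P) = \sum_k v j k * max_minor P k.
  exact: fin_all_exists (fun j => in_minor_span_det_mul (PQ j).2).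
pose G := \matrix_(i, j) \det ((PQ j).2 *m (PQ i).1) : 'M[F]_(size s).
have cap_G i j : (mx_ker (A j) :&: mx_im (A i) == (0 : M))%MS = (G i j != 0).
  have [eAi fullPi freeQi] := PQ_fact i; have [eAj fullPj _] := PQ_fact j.
  by rewrite mxE (ker_cap_im0_det eAi eAj fullPi freeQi fullPj).
have G_det : \det G != 0.
  apply: (@edge_matrix_det_neq0 _ A) => [i j ij|i j|i].
  - by move/eqP: ij => ij; apply: s_scc => // /val_inj.
  - by rewrite -cap_G; split; [exact: (A_R i).1 | exact: (A_R j).1 |].
  - by rewrite -cap_G; apply/cpr_ker_cap_im0/R_cpr; exact: (A_R i).1.
have G_minors : G = (\matrix_(i, k) max_minor (PQ i).1 k) *m (\matrix_(k, j) v j k).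
  by apply/matrixP => i j; rewrite !mxE v_minor; apply: eq_bigr => k _; rewrite !mxE mulrC.
have <- : \rank G = size s by apply: mxrank_unit; rewrite unitmxE unitfE.
rewrite G_minors -(card_ltn_sorted_tuples r d).
exact: leq_trans (mxrankM_maxl _ _) (rank_leq_col _).
Qed.

End Components.

Theorem lemmaV16 (K : fieldExtType rat) (d : nat)
    (X : 'M[K]_d -> Prop) (R : 'M[K]_d -> Prop) :
  linZariski_closed X ->
  (forall A, R A -> gen_semigroup X A) ->
  (forall A, R A -> completely_pseudo_regular A) ->
  (forall A B, same_scc R A B -> sim_S (gen_semigroup X) A B) /\
  (forall (r : nat) (s : seq 'M[K]_d),
      (forall A, A \in s -> R A /\ \rank A = r) ->
      (forall i j, (i < size s)%N -> (j < size s)%N -> i <> j ->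
         ~ same_scc R (nth 0 s i) (nth 0 s j)) ->
      (size s <= 'C(d, r))%N).
Proof.
move=> _ sub_RS R_cpr; split; last exact: scc_rank_card_le.
move=> A B [reachAB reachBA].
have [C [D [SC SD parB]]] :=
  same_scc_parallel sub_RS (@gen_mul _ _ X) R_cpr (conj reachAB reachBA).
have [C' [D' [SC' SD' parA]]] :=
  same_scc_parallel sub_RS (@gen_mul _ _ X) R_cpr (conj reachBA reachAB).
by exists C, D, C', D'.
Qed.
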